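(* Let $L$ be a finite lattice. If $\mathsf{C}(L)=\mathsf{Pol}_{0,1}(L)$, then the only tolerances on $L$ are $\mathrm{id}_L=\{(x,x):x\in L\}$ and $L^2$.
   Context: $L$ has bounds $0,1$. An $n$-ary aggregation function on $L$ ($n\ge1$) is a nondecreasing map $A:L^n\to L$ with $A(0,\dots,0)=0$ and $A(1,\dots,1)=1$; $\mathsf{C}(L)$ is the set of all of them. Polynomials on $L$ are functions $L^n\to L$ built from projections and constants by finitely many pointwise joins and meets; $\mathsf{Pol}_{0,1}(L)$ is the set of polynomials preserving $0$ and $1$ (i.e. $p(0,\dots,0)=0$, $p(1,\dots,1)=1$). A tolerance on $L$ is a reflexive, symmetric binary relation $T$ such that $(a,b),(c,d)\in T$ imply $(a\vee c,b\vee d),(a\wedge c,b\wedge d)\in T$. *)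

From HB Require Import structures.
From mathcomp Require Import all_boot all_order.
Set Implicit Arguments. Unset Strict Implicit. Unset Printing Implicit Defensive.
Import Order.TTheory.
Local Open Scope order_scope.

Inductive lterm (n : nat) (T : Type) : Type :=
  | LVar of 'I_n
  | LCst of T
  | LJoin of lterm n T & lterm n T
  | LMeet of lterm n T & lterm n T.

Section Defs.
Variables (d : Order.disp_t) (L : finTBLatticeType d).

Fixpoint leval (n : nat) (t : lterm n L) (x : 'I_n -> L) : L :=
  match t with
  | LVar i => x i
  | LCst c => c
  | LJoin t1 t2 => leval t1 x `|` leval t2 x
  | LMeet t1 t2 => leval t1 x `&` leval t2 x
  end.

Definition is_polynomial (n : nat) (f : ('I_n -> L) -> L) : Prop :=
  exists t : lterm n L, forall x, f x = leval t x.

Definition in_Pol01 (n : nat) (f : ('I_n -> L) -> L) : Prop :=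
  is_polynomial f /\ f (fun _ => \bot) = \bot /\ f (fun _ => \top) = \top.

Definition is_aggregation (n : nat) (f : ('I_n -> L) -> L) : Prop :=
  (forall x y : 'I_n -> L, (forall i, x i <= y i) -> f x <= f y) /\
  f (fun _ => \bot) = \bot /\ f (fun _ => \top) = \top.

Definition C_eq_Pol01 : Prop :=
  forall n : nat, 0 < n -> forall f : ('I_n -> L) -> L,
    is_aggregation f <-> in_Pol01 f.

Definition is_tolerance (T : L -> L -> Prop) : Prop :=
  (forall a, T a a) /\
  (forall a b, T a b -> T b a) /\
  (forall a b c e, T a b -> T c e -> T (a `|` c) (b `|` e) /\ T (a `&` c) (b `&` e)).

End Defs.

From mathcomp Require Import all_boot all_order.
From Stdlib Require Import Classical.

Set Implicit Arguments.
Unset Strict Implicit.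
Unset Printing Implicit Defensive.

Local Open Scope order_scope.
Import Order.TTheory.

(* A tolerance relating some u < v relates the outputs of every polynomial at
   u and at v.  The step function sending x to \top if v <= x and to \bot
   otherwise is an aggregation function, hence a polynomial under C(L) =
   Pol_{0,1}(L); so T relates \bot and \top, and joining and meeting with
   arbitrary elements then makes T total. *)

Section Tolerance.
Variables (d : Order.disp_t) (L : finTBLatticeType d) (T : L -> L -> Prop).
Hypothesis tolT : is_tolerance T.

Let tolT_refl : forall a, T a a := proj1 tolT.
Let tolT_sym a b : T a b -> T b a.
Proof. exact: (proj1 (proj2 tolT)). Qed.
Let tolT_join a b c e : T a b -> T c e -> T (a `|` c) (b `|` e).
Proof. by move=> Tab Tce; case: (proj2 (proj2 tolT) _ _ _ _ Tab Tce). Qed.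
Let tolT_meet a b c e : T a b -> T c e -> T (a `&` c) (b `&` e).
Proof. by move=> Tab Tce; case: (proj2 (proj2 tolT) _ _ _ _ Tab Tce). Qed.

Lemma tolerance_leval n (t : lterm n L) (x y : 'I_n -> L) :
  (forall i, T (x i) (y i)) -> T (leval t x) (leval t y).
Proof.
move=> Txy; elim: t => /= [i|c|t1 IH1 t2 IH2|t1 IH1 t2 IH2].
- exact: Txy.
- exact: tolT_refl.
- exact: tolT_join.
- exact: tolT_meet.
Qed.

Lemma tolerance_lt_pair a b : T a b -> a != b -> exists u v, T u v /\ u < v.
Proof.
move=> Tab nab; have Tmeet : T (a `&` b) b.
  by have := tolT_meet Tab (tolT_refl b); rewrite meetxx.
have [Eb|nEb] := eqVneq (a `&` b) b.
  exists b, a; split; first exact: tolT_sym.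
  by rewrite lt_neqAle eq_sym nab -Eb leIl.
by exists (a `&` b), b; rewrite lt_neqAle nEb leIr.
Qed.

Lemma tolerance_total_of_bot_top : T \bot \top -> forall a b, T a b.
Proof.
move=> T01 a b.
have Ta1 : T a \top by have := tolT_join T01 (tolT_refl a); rewrite join0x join1x.
have T1b : T \top b by have := tolT_join (tolT_sym T01) (tolT_refl b); rewrite join0x join1x.
by have := tolT_meet Ta1 T1b; rewrite meetx1 meet1x.
Qed.

End Tolerance.

Definition step_fun d (L : finTBLatticeType d) (v : L) (x : 'I_1 -> L) : L :=
  if v <= x ord0 then \top else \bot.

Lemma step_fun_aggregation d (L : finTBLatticeType d) (v : L) :
  \bot < v -> is_aggregation (step_fun v).
Proof.
rewrite /step_fun => v_gt0; split; last split => /=.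
- move=> x y le_xy; case: ifP => [v_le_x|_]; last exact: le0x.
  by rewrite (le_trans v_le_x (le_xy ord0)).
- by rewrite (lt_geF v_gt0).
- by rewrite lex1.
Qed.

Theorem mainTheorem3 (d : Order.disp_t) (L : finTBLatticeType d) :
  C_eq_Pol01 L ->
  forall T : L -> L -> Prop, is_tolerance T ->
    (forall a b, T a b <-> a = b) \/ (forall a b, T a b).
Proof.
move=> CPol T tolT.
have [idT|] := classic (forall a b, T a b -> a = b).
  by left=> a b; split=> [/idT|->] //; apply: (proj1 tolT).
move=> /not_all_ex_not[a] /not_all_ex_not[b] /(imply_to_and (T a b))[Tab /eqP nab].
have [u [v [Tuv lt_uv]]] := tolerance_lt_pair tolT Tab nab.
have [[t step_t] _] := proj1 (CPol 1%N isT _) (step_fun_aggregation (le_lt_trans (le0x u) lt_uv)).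
right; apply: (tolerance_total_of_bot_top tolT).
have := tolerance_leval tolT t (fun _ => Tuv).
by rewrite -!step_t /step_fun /= lexx (lt_geF lt_uv).
Qed.
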